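(* Let $n,m,k$ be positive integers with $n\le m$ and $k<m\le kn$. Then $$\sup_I \frac{\text{OPT-ESW}(I)}{\max_{\mathcal{A}\in \mathcal{C}_k(I)}\text{ESW}(\mathcal{A})}=\max\left\{\frac{m-n+1}{k},1\right\},$$ where the supremum ranges over all single-category instances $I$ with $n$ agents, $m$ goods and cardinality constraint $k$.
   Context: A single-category instance has $n$ agents and a set $M$ of $m$ indivisible goods; each agent $i$ has an additive utility function $u_i:2^M\to\mathbb{R}_{\ge 0}$ with $u_i(\emptyset)=0$ and $u_i(M)=1$. An allocation is a partition $(A_1,\dots,A_n)$ of $M$; it is cardinal if $|A_i|\le k$ for all $i$, and $\mathcal{C}_k(I)$ denotes the set of cardinal allocations. $\text{ESW}(\mathcal{A})=\min_i u_i(A_i)$ and $\text{OPT-ESW}(I)$ is its maximum over all allocations. If $\text{OPT-ESW}(I)=0$ the ratio is defined to be $1$. *)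

From HB Require Import structures.
From mathcomp Require Import all_boot all_order all_algebra.
From mathcomp Require Import all_classical all_reals ereal.
Set Implicit Arguments. Unset Strict Implicit. Unset Printing Implicit Defensive.
Import Order.TTheory GRing.Theory Num.Theory.
Local Open Scope ring_scope.

Section Defs.
Variables (R : realType) (n m : nat).

Definition instance : set ('I_n -> 'I_m -> R) :=
  [set u | (forall i g, 0 <= u i g) /\ (forall i, \sum_(g < m) u i g = 1)].

(* An allocation (A_1,...,A_n) partitioning M: each good g goes to agent a g;
   A_i = [set g | a g == i] (bundles may be empty). *)
Definition bundle (a : {ffun 'I_m -> 'I_n}) (i : 'I_n) : {set 'I_m} :=
  [set g | a g == i].

Definition util (u : 'I_n -> 'I_m -> R) (i : 'I_n) (A : {set 'I_m}) : R :=
  \sum_(g in A) u i g.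

Definition cardinal (k : nat) (a : {ffun 'I_m -> 'I_n}) : bool :=
  [forall i, #|bundle a i| <= k]%N.

(* ESW = min_i u_i(A_i).  The neutral element 1 is harmless: for instances
   u_i(A_i) <= u_i(M) = 1, and n > 0 in the theorem. *)
Definition ESW (u : 'I_n -> 'I_m -> R) (a : {ffun 'I_m -> 'I_n}) : R :=
  \big[Num.min/1]_(i < n) util u i (bundle a i).

(* OPT-ESW: maximum over all allocations (ESW >= 0, so neutral 0 is harmless). *)
Definition OPT_ESW (u : 'I_n -> 'I_m -> R) : R :=
  \big[Num.max/0]_(a : {ffun 'I_m -> 'I_n}) ESW u a.

(* max ESW over cardinal allocations (nonempty when m <= k n). *)
Definition maxC_ESW (k : nat) (u : 'I_n -> 'I_m -> R) : R :=
  \big[Num.max/0]_(a : {ffun 'I_m -> 'I_n} | cardinal k a) ESW u a.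

(* The ratio, in the extended reals: 1 if OPT-ESW = 0 (paper's convention),
   +oo if the denominator vanishes while OPT-ESW > 0. *)
Definition esw_ratio (k : nat) (u : 'I_n -> 'I_m -> R) : \bar R :=
  if OPT_ESW u == 0 then 1%E
  else if maxC_ESW k u == 0 then +oo%E
  else (OPT_ESW u / maxC_ESW k u)%:E.

End Defs.

(* An optimal allocation of positive welfare v gives every agent a nonempty
   bundle, so no bundle has more than M = m - n + 1 goods.  Keeping in each
   bundle its q = min(k, M) most valuable goods retains a fraction q / M of its
   value, and since m <= k n the other goods can be handed out without giving
   anyone more than k goods: some cardinal allocation has welfare at least
   q v / M, and M / q = max(M / k, 1).  The bound is attained when one agent
   values M goods equally and each other agent wants a single, distinct good:
   the optimum is 1, whereas any cardinal allocation leaves the first agent at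
   most k / M. *)

From HB Require Import structures.
From mathcomp Require Import all_boot all_order all_algebra.
From mathcomp Require Import all_classical all_reals ereal.
From mathcomp Require Import zify.
Set Implicit Arguments. Unset Strict Implicit. Unset Printing Implicit Defensive.
Import Order.TTheory GRing.Theory Num.Theory.
Local Open Scope ring_scope.

Section Allocations.
Variables n m : nat.
Implicit Types (a : {ffun 'I_m -> 'I_n}) (F : {set 'I_m}).

Lemma sum_card_setI_bundle a F : (\sum_(i < n) #|F :&: bundle a i|)%N = #|F|.
Proof.
rewrite -sum1_card (partition_big a xpredT) //=.
by apply: eq_bigr => i _; rewrite -sum1_card; apply: eq_bigl => g; rewrite !inE.
Qed.

Lemma sum_card_bundle a : (\sum_(i < n) #|bundle a i|)%N = m.
Proof.
transitivity #|[set: 'I_m]|; last by rewrite cardsT card_ord.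
by rewrite -(sum_card_setI_bundle a); apply: eq_bigr => i _; rewrite finset.setTI.
Qed.

Lemma card_bundle_le a i :
  (forall j, 0 < #|bundle a j|)%N -> (#|bundle a i| <= m - n + 1)%N.
Proof.
move=> bundle_gt0; have := sum_card_bundle a; rewrite (bigD1 i) //=.
set others := (X in (_ + X)%N).
have : (n.-1 <= others)%N.
  have <- : #|predC1 i| = n.-1 by rewrite cardC1 card_ord.
  rewrite -sum1_card; apply: leq_sum => j _; exact: bundle_gt0.
have := ltn_ord i; lia.
Qed.

Lemma exists_card_setI_bundle_lt k a F g : (m <= k * n)%N -> g \notin F ->
  exists i, (#|F :&: bundle a i| < k)%N.
Proof.
move=> le_m_kn gNF; case: (pickP [pred i | #|F :&: bundle a i| < k]%N) => [i|full].
  by exists i.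
have : (#|F| < #|[set: 'I_m]|)%N.
  by rewrite proper_card // properT; apply: contraNneq gNF => ->.
rewrite cardsT card_ord -(sum_card_setI_bundle a) ltnNge (leq_trans le_m_kn) //.
rewrite mulnC -[X in (X * _)%N]card_ord -sum_nat_const.
by apply: leq_sum => i _; rewrite leqNgt; apply/negbT/full.
Qed.

Lemma cardinal_extension k a F : (m <= k * n)%N ->
  (forall i, #|F :&: bundle a i| <= k)%N -> exists2 b, cardinal k b & {in F, b =1 a}.
Proof.
move=> le_m_kn; have [N] := ubnP #|~: F|; elim: N a F => // N IH a F.
rewrite ltnS => leCF_N load_le.
have [FT|F_neqT] := eqVneq F [set: 'I_m].
  exists a => //; apply/forallP => i.
  by rewrite -(finset.setTI (bundle a i)) -FT load_le.
have /properP [_ [g _ gNF]] : F \proper [set: 'I_m] by rewrite properT.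
have [i lt_i] := exists_card_setI_bundle_lt a le_m_kn gNF.
pose a' := [ffun x => if x == g then i else a x].
have setI_bundle' j : (g |: F) :&: bundle a' j =
    if j == i then g |: (F :&: bundle a i) else F :&: bundle a j.
  apply/setP => x; case: (j =P i) => [->|/eqP ji]; rewrite !inE ffunE.
    by case: (x =P g) => [->|]; rewrite ?eqxx.
  case: (x =P g) => [->|] //=.
  by rewrite (negbTE gNF) eq_sym (negbTE ji).
have [b b_card b_a'] : exists2 b, cardinal k b & {in g |: F, b =1 a'}.
  apply: IH => [|j].
    have := cardsC F; have := cardsC (g |: F); rewrite cardsU1 gNF; lia.
  rewrite setI_bundle'; case: eqP => // _.
  by rewrite cardsU1 (leq_trans _ lt_i) // -add1n leq_add2r leq_b1.
exists b => // x xF; rewrite b_a' ?ffunE; last by rewrite in_setU1 xF orbT.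
by case: eqP => // xg; move: gNF; rewrite -xg xF.
Qed.

End Allocations.

Section HeavySubsets.
Variables (R : realDomainType) (T : finType) (w : T -> R).

Lemma heavy_subset (A : {set T}) k : (k <= #|A|)%N ->
  exists S : {set T}, [/\ S \subset A, #|S| = k &
    k%:R * \sum_(x in A) w x <= #|A|%:R * \sum_(x in S) w x].
Proof.
have [N cardA] : {N | #|A| = N} by exists #|A|.
rewrite cardA; elim: N A cardA => [|N IH] A cardA.
  by rewrite leqn0 => /eqP ->; exists A.
rewrite leq_eqVlt => /predU1P [->|le_k_N]; first by exists A.
have [x xA] : exists x, x \in A by apply/set0Pn; rewrite -card_gt0 cardA.
have [y yA y_min] := arg_minP w xA; have {}yA : y \in A := yA.
have /IH /(_ le_k_N) [S [SAy cardS heavy]] : #|A :\ y| = N.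
  by move: cardA; rewrite (cardsD1 y) yA => -[].
have SA : S \subset A := fintype.subset_trans SAy (subD1set A y).
exists S; split => //.
rewrite (big_setD1 y yA) /= -addn1 natrD mulrDr mulrDl mul1r addrC.
apply: lerD => //.
rewrite -cardS mulr_natl -sumr_const; apply: ler_sum => z zS.
exact/y_min/(fintype.subsetP SA).
Qed.

Lemma heavy_subset_minn (A : {set T}) k M : (forall x, 0 <= w x) -> (#|A| <= M)%N ->
  exists S : {set T}, [/\ S \subset A, (#|S| <= k)%N &
    (minn k M)%:R * \sum_(x in A) w x <= M%:R * \sum_(x in S) w x].
Proof.
move=> w_ge0 le_A_M; have sum_ge0 B : 0 <= \sum_(x in B) w x by exact: sumr_ge0.
have [le_k_A|lt_A_k] := leqP k #|A|.
  have [S [SA cardS heavy]] := heavy_subset le_k_A.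
  exists S; rewrite cardS (minn_idPl (leq_trans le_k_A le_A_M)); split => //.
  by apply: (le_trans heavy); rewrite ler_wpM2r ?sum_ge0 ?ler_nat.
exists A; split => //; first exact: ltnW.
by apply: ler_wpM2r; rewrite ?sum_ge0 // ler_nat geq_minr.
Qed.

End HeavySubsets.

Section Welfare.
Variables (R : realType) (n m : nat).
Implicit Types (u : 'I_n -> 'I_m -> R) (a : {ffun 'I_m -> 'I_n}).

Lemma ESW_le_util u a i : ESW u a <= util u i (bundle a i).
Proof. exact: bigmin_le. Qed.

Lemma ESW_le1 u a : ESW u a <= 1.
Proof. exact: bigmin_le_id. Qed.

Lemma le_ESW u a x :
  x <= 1 -> (forall i, x <= util u i (bundle a i)) -> x <= ESW u a.
Proof. by move=> x_le1 x_le; apply: le_bigmin => // i _; exact: x_le. Qed.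

Lemma ESW_le_OPT_ESW u a : ESW u a <= OPT_ESW u.
Proof. exact: le_bigmax. Qed.

Lemma OPT_ESW_ge0 u : 0 <= OPT_ESW u.
Proof. exact: bigmax_ge_id. Qed.

Lemma OPT_ESW_le1 u : OPT_ESW u <= 1.
Proof. by apply: bigmax_le => // a _; exact: ESW_le1. Qed.

Lemma OPT_ESW_attained u : OPT_ESW u != 0 -> exists a, OPT_ESW u = ESW u a.
Proof.
apply: (big_ind (fun x => x != 0 -> exists a, x = ESW u a)) => [|x y|a _ _].
- by rewrite eqxx.
- by case: (leP x y).
- by exists a.
Qed.

Lemma maxC_ESW_ge0 k u : 0 <= maxC_ESW k u.
Proof. exact: bigmax_ge_id. Qed.

Lemma ESW_le_maxC_ESW k u a : cardinal k a -> ESW u a <= maxC_ESW k u.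
Proof. exact: le_bigmax_cond. Qed.

Lemma maxC_ESW_le_OPT_ESW k u : maxC_ESW k u <= OPT_ESW u.
Proof. by apply: bigmax_le => [|a _]; [exact: OPT_ESW_ge0 | exact: ESW_le_OPT_ESW]. Qed.

Lemma esw_ratio_le k u x :
  1 <= x -> OPT_ESW u <= x * maxC_ESW k u -> (esw_ratio k u <= x%:E)%E.
Proof.
move=> x_ge1 OPT_le; rewrite /esw_ratio.
have [_|OPT_neq0] := eqVneq; first by rewrite lee_fin.
have OPT_gt0 : 0 < OPT_ESW u by rewrite lt_def OPT_neq0 OPT_ESW_ge0.
have maxC_gt0 : 0 < maxC_ESW k u.
  by rewrite -(pmulr_rgt0 _ (lt_le_trans ltr01 x_ge1)) (lt_le_trans OPT_gt0).
by rewrite gt_eqF // lee_fin ler_pdivrMr.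
Qed.

Lemma esw_ratio_ge k u x :
  0 < OPT_ESW u -> x * maxC_ESW k u <= OPT_ESW u -> (x%:E <= esw_ratio k u)%E.
Proof.
move=> OPT_gt0 le_OPT; rewrite /esw_ratio gt_eqF //.
have [_|maxC_neq0] := eqVneq; first exact: leey.
have maxC_gt0 : 0 < maxC_ESW k u by rewrite lt_def maxC_neq0 maxC_ESW_ge0.
by rewrite lee_fin ler_pdivlMr.
Qed.

Lemma util_subset u i (A B : {set 'I_m}) :
  (forall g, 0 <= u i g) -> A \subset B -> util u i A <= util u i B.
Proof.
move=> u_ge0 AB; rewrite /util [X in _ <= X](big_setID A) /= (finset.setIidPr AB).
by rewrite lerDl sumr_ge0.
Qed.

Lemma minn_mul_OPT_ESW_le k u : instance u -> (m <= k * n)%N ->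
  (minn k (m - n + 1))%:R * OPT_ESW u <= (m - n + 1)%:R * maxC_ESW k u.
Proof.
move=> [u_ge0 _] le_m_kn; set M := (m - n + 1)%N; set q := minn k M.
have [->|OPT_neq0] := eqVneq (OPT_ESW u) 0.
  by rewrite mulr0 mulr_ge0 ?ler0n ?maxC_ESW_ge0.
have [a OPTa] := OPT_ESW_attained OPT_neq0.
have OPT_gt0 : 0 < OPT_ESW u by rewrite lt_def OPT_neq0 OPT_ESW_ge0.
have le_OPT_util i : OPT_ESW u <= util u i (bundle a i) by rewrite OPTa ESW_le_util.
have bundle_gt0 j : (0 < #|bundle a j|)%N.
  rewrite card_gt0; apply: contraTneq (le_OPT_util j) => ->.
  by rewrite /util big_set0 -ltNge.
have /fin_all_exists [S S_heavy] i : exists Si : {set 'I_m},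
    [/\ Si \subset bundle a i, (#|Si| <= k)%N & q%:R * OPT_ESW u <= M%:R * util u i Si].
  have [Si [SiB Sik heavy]] := heavy_subset_minn k (u_ge0 i) (card_bundle_le i bundle_gt0).
  by exists Si; split => //; apply: le_trans heavy; rewrite ler_wpM2l ?le_OPT_util.
pose F := [set g | g \in S (a g)].
have F_bundle i : F :&: bundle a i = S i.
  apply/setP => g; rewrite !inE; apply/andP/idP => [[gS /eqP <-] //|gS].
  have [SB _ _] := S_heavy i.
  by have := fintype.subsetP SB g gS; rewrite inE => /eqP ->.
have [b b_card b_a] : exists2 b, cardinal k b & {in F, b =1 a}.
  by apply: cardinal_extension le_m_kn _ => i; rewrite F_bundle; have [] := S_heavy i.
have S_bundle i : S i \subset bundle b i.
  apply/fintype.subsetP => g; rewrite -F_bundle finset.in_setI => /andP [gF].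
  by rewrite !inE b_a.
have M_gt0 : (0 < M%:R :> R) by rewrite ltr0n /M addn1.
have : q%:R * OPT_ESW u / M%:R <= ESW u b.
  apply: le_ESW => [|i].
    rewrite ler_pdivrMr // mul1r (le_trans (ler_wpM2l (ler0n _ _) (OPT_ESW_le1 u))) //.
    by rewrite mulr1 ler_nat geq_minr.
  apply: le_trans (util_subset (u_ge0 i) (S_bundle i)).
  by have [_ _ heavy] := S_heavy i; rewrite ler_pdivrMr // [_ * M%:R]mulrC.
rewrite ler_pdivrMr // [_ * M%:R]mulrC => /le_trans; apply.
by rewrite ler_wpM2l ?ler0n ?ESW_le_maxC_ESW.
Qed.

End Welfare.

Lemma natr_div_minn (R : realFieldType) k M : (0 < k)%N -> (0 < M)%N ->
  M%:R / (minn k M)%:R = Num.max (M%:R / k%:R) 1 :> R.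
Proof.
move=> k_gt0 M_gt0; have [le_kM|lt_Mk] := leqP k M.
  apply/esym/max_idPl.
  by rewrite ler_pdivlMr ?ltr0n // mul1r ler_nat.
rewrite divff ?pnatr_eq0 -?lt0n //; apply/esym/max_idPr.
by rewrite ler_pdivrMr ?ltr0n // mul1r ler_nat ltnW.
Qed.

Section HardInstance.
Variables (R : realType) (n m : nat).
Hypothesis lt_n_m : (n < m)%N.

Definition hard_instance : 'I_n.+1 -> 'I_m -> R := fun i g =>
  if i == ord0 then (if (g < m - n)%N then (m - n)%:R^-1 else 0)
  else (if g == (m - i)%N :> nat then 1 else 0).

Lemma hard_instance_instance : instance hard_instance.
Proof.
split=> [i g|i]; first by rewrite /hard_instance; do 2!case: ifP => //; rewrite invr_ge0.
rewrite /hard_instance; case: eqP => [_|/eqP i_neq0].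
  rewrite -big_mkcond (big_ord_narrow (leq_subr n m)) sumr_const card_ord.
  by rewrite -[LHS]mulr_natr mulVf // pnatr_eq0 subn_eq0 -ltnNge.
rewrite -big_mkcond (big_ord1_eq _ (fun=> 1)) ifT //.
by rewrite ltn_subrL lt0n i_neq0 (leq_ltn_trans (leq0n n)).
Qed.

Lemma OPT_ESW_hard_instance : 1 <= OPT_ESW hard_instance.
Proof.
pose a0 : {ffun 'I_m -> 'I_n.+1} :=
  [ffun g : 'I_m => if (g < m - n)%N then ord0 else inord (m - g)].
apply: le_trans _ (ESW_le_OPT_ESW _ a0); apply: le_ESW => // i.
have [u_ge0 u_sum1] := hard_instance_instance.
have [->|i_neq0] := eqVneq i ord0.
  rewrite -(u_sum1 ord0) /util [X in _ <= X]big_mkcond /=; apply: ler_sum => g _.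
  rewrite inE ffunE /hard_instance eqxx.
  by case: ifP => _; rewrite ?eqxx //; case: ifP.
have i_gt0 : (0 < i)%N by rewrite lt0n.
have lt_mi_m : (m - i < m)%N by rewrite ltn_subrL i_gt0 (leq_ltn_trans (leq0n n)).
have gi_a0 : Ordinal lt_mi_m \in bundle a0 i.
  have le_i_n := ltn_ord i.
  rewrite inE ffunE /= ifF; last lia.
  by rewrite subKn ?inord_val // ltnW // (leq_trans _ lt_n_m).
rewrite -finset.sub1set in gi_a0; apply: le_trans (util_subset (u_ge0 i) gi_a0).
by rewrite /util big_set1 /hard_instance (negbTE i_neq0) eqxx.
Qed.

Lemma maxC_ESW_hard_instance k : maxC_ESW k hard_instance <= k%:R / (m - n)%:R.
Proof.
apply: bigmax_le => [|a /forallP a_card]; first by rewrite divr_ge0 ?ler0n.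
apply: le_trans (ESW_le_util _ a ord0) _.
rewrite /util /hard_instance eqxx.
apply: (@le_trans _ _ (\sum_(g in bundle a ord0) (m - n)%:R^-1)).
  by apply: ler_sum => g _; case: ifP; rewrite ?invr_ge0.
by rewrite sumr_const -[X in X <= _]mulr_natl ler_wpM2r ?invr_ge0 ?ler_nat ?a_card.
Qed.

Lemma esw_ratio_hard_instance k : (0 < k)%N ->
  ((Num.max ((m - n)%:R / k%:R) 1)%:E <= esw_ratio k hard_instance)%E.
Proof.
move=> k_gt0; have OPT_ge1 := OPT_ESW_hard_instance.
apply: esw_ratio_ge; first exact: lt_le_trans ltr01 OPT_ge1.
rewrite maxr_pMl ?maxC_ESW_ge0 // ge_max mul1r maxC_ESW_le_OPT_ESW andbT.
apply: le_trans OPT_ge1; apply: le_trans (ler_wpM2l _ (maxC_ESW_hard_instance k)) _.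
  by rewrite divr_ge0 ?ler0n.
have subn_neq0 : (m - n)%:R != 0 :> R by rewrite pnatr_eq0 subn_eq0 -ltnNge.
by rewrite mulrA divfK ?divff // pnatr_eq0 -lt0n.
Qed.

End HardInstance.

Local Open Scope classical_set_scope.
Local Open Scope ring_scope.

Theorem theorem2 (R : realType) (n m k : nat) :
  (0 < n)%N -> (0 < m)%N -> (0 < k)%N -> (n <= m)%N -> (k < m)%N -> (m <= k * n)%N ->
  ereal_sup [set @esw_ratio R n m k u | u in @instance R n m] =
  (Num.max ((m - n + 1)%:R / k%:R) 1)%:E.
Proof.
move=> n_gt0 _ k_gt0 le_n_m _ le_m_kn.
apply/eqP; rewrite eq_le; apply/andP; split.
  apply: ge_ereal_sup => _ [u u_inst <-].
  have M_gt0 : (0 < m - n + 1)%N by rewrite addn1.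
  have q_gt0 : (0 < minn k (m - n + 1))%N by rewrite leq_min k_gt0.
  rewrite -natr_div_minn //; apply: esw_ratio_le.
    by rewrite ler_pdivlMr ?ltr0n // mul1r ler_nat geq_minr.
  rewrite mulrAC ler_pdivlMr ?ltr0n // mulrC.
  exact: minn_mul_OPT_ESW_le.
case: n n_gt0 le_n_m le_m_kn => // n _ lt_n_m _.
rewrite addn1 subnSK //; apply: le_trans (esw_ratio_hard_instance R lt_n_m k_gt0) _.
by apply: ereal_sup_ubound; exists (@hard_instance R n m) => //; exact: hard_instance_instance.
Qed.
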